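(* For all positive integers $\Delta$ and positive reals $\beta$ and $\mu_S$ there is $\mu_T>0$ such that the following holds. Let $S$ and $T$ be disjoint sets, $\mathcal{S}\subseteq\binom{S}{\Delta}$ a family of pairwise disjoint $\Delta$-sets in $S$ with $|\mathcal{S}|\le\frac1\Delta(1-\mu_S)|T|$, and $\mathcal{T}\subseteq\binom{T}{\Delta}$ a family of $\Delta$-sets in $T$ with $|\mathcal{T}|\le\mu_T|T|^\Delta$. Then a uniformly random injective function $f:S\to T$ satisfies $|f(\mathcal{S})\setminus\mathcal{T}|>(1-\beta)|\mathcal{S}|$ with probability at least $1-\beta^{|\mathcal{S}|}$.
   Context: $f(\mathcal{S})$ denotes the family $\{f(A):A\in\mathcal{S}\}$ of images of the sets in $\mathcal{S}$; $\binom{S}{\Delta}$ is the family of $\Delta$-element subsets of $S$. *)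

From HB Require Import structures.
From mathcomp Require Import all_boot all_order all_algebra.
From mathcomp Require Import reals.
Set Implicit Arguments. Unset Strict Implicit. Unset Printing Implicit Defensive.
Import Order.TTheory GRing.Theory Num.Theory.

Definition image_family (S T : finType) (f : S -> T) (SS : {set {set S}})
  : {set {set T}} := [set f @: (A : {set S}) | A in SS].

Definition n_inj (S T : finType) (P : {ffun S -> T} -> bool) : nat :=
  #|[set f : {ffun S -> T} | injectiveb f && P f]|.

From HB Require Import structures.
From mathcomp Require Import all_boot all_order all_algebra.
From mathcomp Require Import reals.
From mathcomp Require Import zify lra.
Import Order.TTheory GRing.Theory Num.Theory.
Set Implicit Arguments. Unset Strict Implicit. Unset Printing Implicit Defensive.

(* If an injection f : S -> T leaves at most (1 - beta)|SS| images outside TT,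
   then the subfamily J of blocks A with f(A) in TT has |J| >= beta |SS|.  For a
   fixed J, build f block by block: each block of J has at most |TT| Delta^Delta
   admissible restrictions, and the remaining points extend freely, so f sends all of J
   into TT for at most a fraction (|TT| Delta^Delta)^|J| / |T|^_(Delta |J|) of the
   injections.  As Delta |J| <= (1 - muS)|T|, the falling factorial is at least
   (muS |T|)^(Delta |J|), so the fraction is at most q^|J| where
   muT = q muS^Delta / Delta^Delta.  Taking q = (beta/2)^r with r beta > 1 makes
   q^|J| <= (beta/2)^|SS|, and a union bound over the 2^|SS| candidate subfamilies
   J gives the failure probability beta^|SS|. *)

Lemma leq_card_bigcup (I X : finType) (P : pred I) (E : I -> {set X}) :
  #|\bigcup_(i | P i) E i| <= \sum_(i | P i) #|E i|.
Proof.
elim/big_rec2: _ => [|i n U _ leUn]; first by rewrite cards0.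
by rewrite (leq_trans (leq_card_setU _ _).1) // leq_add2l.
Qed.

Lemma ffactD n a b : n ^_ (a + b) = n ^_ a * (n - a) ^_ b.
Proof.
elim: b => [|b IHb]; first by rewrite addn0 ffactn0 muln1.
by rewrite addnS !ffactnSr IHb subnDA mulnA.
Qed.

Section PartialInjections.

Variables D T : finType.
Implicit Types (U V W A : {set D}) (f g : {ffun D -> option T}).

Definition pinj V f : bool :=
  [forall x, (f x != None) == (x \in V)] &&
  [forall x, forall y, (x \in V) ==> (f x == f y) ==> (x == y)].

Definition restr f V : {ffun D -> option T} :=
  [ffun x => if x \in V then f x else None].

Definition pimg f A : {set T} := [set t | Some t \in f @: A].

Lemma pinjP V f :
  reflect ((forall x, (f x != None) = (x \in V)) /\
           {in V & predT, injective f}) (pinj V f).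
Proof.
apply: (iffP andP) => [[/forallP dom /forallP inj]|[dom inj]]; split.
- by move=> x; exact: eqP (dom x).
- move=> x y xV _ fxy; move/forallP: (inj x) => /(_ y).
  by rewrite xV fxy eqxx => /eqP.
- by apply/forallP => x; rewrite dom.
- apply/forallP => x; apply/forallP => y; apply/implyP => xV.
  by apply/implyP => /eqP/(inj x y xV isT) ->.
Qed.

Lemma pinj_dom V f x : pinj V f -> x \notin V -> f x = None.
Proof. by case/pinjP => dom _ xV; apply/eqP; rewrite -[_ == _]negbK dom. Qed.

Lemma pinj_restr V W f : V \subset W -> pinj W f -> pinj V (restr f V).
Proof.
move=> sVW /pinjP [dom inj]; apply/pinjP; split => [x|x y xV _].
  by rewrite ffunE; case: ifP => // xV; rewrite dom (subsetP sVW).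
rewrite !ffunE xV; case: ifP => yV fxy; first exact: inj (subsetP sVW _ xV) _ fxy.
by move: (dom x); rewrite fxy eqxx (subsetP sVW).
Qed.

Lemma pimg_restr f V A : A \subset V -> pimg (restr f V) A = pimg f A.
Proof.
move=> sAV; apply/setP => t; rewrite !inE.
by rewrite (@eq_in_imset _ _ _ f) // => x xA; rewrite ffunE (subsetP sAV).
Qed.

Lemma pinj_eq V f g : pinj V f -> pinj V g -> {in V, f =1 g} -> f = g.
Proof.
move=> fV gV efg; apply/ffunP => x.
by case: (boolP (x \in V)) => [/efg //|xV]; rewrite !(pinj_dom _ xV).
Qed.

Lemma card_pinj_fiber V x g : x \notin V -> pinj V g ->
  #|[set f | pinj (x |: V) f & restr f V == g]| <= #|T| - #|V|.
Proof.
move=> xV /pinjP [gdom ginj]; set F := [set f | _].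
have injF : {in F &, injective (fun f => f x)}.
  move=> f1 f2; rewrite !inE => /andP [f1W /eqP r1] /andP [f2W /eqP r2] e.
  apply: (pinj_eq f1W f2W) => y /setU1P [-> //|yV].
  by move/ffunP: r1 => /(_ y); move/ffunP: r2 => /(_ y); rewrite !ffunE yV => -> ->.
rewrite -(card_in_imset injF).
have sub : (fun f => f x) @: F \subset ~: (None |: [set g y | y in V]).
  apply/subsetP => o /imsetP [f]; rewrite !inE => /andP [/pinjP [dom inj] /eqP r] ->.
  rewrite negb_or dom !inE eqxx /=; apply/imsetP => -[y yV e].
  have gy : g y = f y by rewrite -r ffunE yV.
  have exy := inj x y (setU11 _ _) isT (etrans e gy).
  by move: xV; rewrite exy yV.
apply: (leq_trans (subset_leq_card sub)).
have := cardsC (None |: [set g y | y in V]); rewrite card_option.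
rewrite cardsU1 (card_in_imset (fun a b aV _ => ginj a b aV isT)).
have -> : None \notin [set g y | y in V].
  by apply/imsetP => -[y yV e]; move: (gdom y); rewrite -e eqxx yV.
move=> E; lia.
Qed.

Lemma card_pinj_extU1 V x (P : pred {ffun D -> option T}) : x \notin V ->
  #|[set f | pinj (x |: V) f & P (restr f V)]|
    <= (#|T| - #|V|) * #|[set g | pinj V g & P g]|.
Proof.
move=> xV; rewrite -sum1_card.
rewrite (partition_big (restr^~ V) [in [set g | pinj V g & P g]]); last first.
  move=> f; rewrite !inE => /andP [fW Pf]; rewrite Pf andbT.
  exact: pinj_restr (subsetUr _ _) fW.
rewrite mulnC -sum_nat_const; apply: leq_sum => g; rewrite inE => /andP [gV _].
apply: leq_trans (card_pinj_fiber xV gV).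
rewrite sum1dep_card; apply: subset_leq_card; apply/subsetP => f.
by rewrite !inE => /andP [/andP [-> _] ->].
Qed.

Lemma card_pinj_ext U (C : pred {ffun D -> option T}) :
    (forall V f, U \subset V -> C (restr f V) = C f) ->
  forall n W, U \subset W -> #|W| = #|U| + n ->
  #|[set f | pinj W f & C f]| <= #|[set f | pinj U f & C f]| * (#|T| - #|U|) ^_ n.
Proof.
move=> restrC; elim=> [|n IHn] W sUW cW.
  have -> : W = U by apply/eqP; rewrite eq_sym eqEcard sUW cW addn0 leqnn.
  by rewrite ffactn0 muln1.
have [x xW xU] : exists2 x, x \in W & x \notin U.
  by apply/subsetPn/negP => sWU; move: (subset_leq_card sWU); rewrite cW; lia.
set V := W :\ x.
have sUV : U \subset V by rewrite subsetD1 sUW xU.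
have cV : #|V| = #|U| + n by move: cW; rewrite (cardsD1 x W) xW addnS => -[].
have -> : [set f | pinj W f & C f] = [set f | pinj (x |: V) f & C (restr f V)].
  by apply/setP => f; rewrite setD1K // !inE restrC.
have xV : x \notin V by rewrite setD11.
apply: leq_trans (card_pinj_extU1 C xV) _.
rewrite ffactnSr mulnA [X in _ <= X]mulnC cV subnDA.
by rewrite leq_mul // IHn.
Qed.

Lemma card_pinj_block V A (TT : {set {set T}}) k (P : pred {ffun D -> option T}) :
  #|A| = k -> {in TT, forall B : {set T}, #|B| = k} ->
  #|[set f | pinj (A :|: V) f & P (restr f V) && (pimg f A \in TT)]|
    <= #|TT| * k ^ k * #|[set g | pinj V g & P g]|.
Proof.
move=> cA cTT; set F := [set f | _]; set G := [set g | _].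
pose H := \bigcup_(B in TT)
  setXn (fun x : D => if x \in A then Some @: B else [set None]).
have injF : {in F &, injective (fun f => (restr f V, restr f A))}.
  move=> f1 f2; rewrite !inE => /andP [f1W _] /andP [f2W _] [/ffunP e1 /ffunP e2].
  apply: (pinj_eq f1W f2W) => y yAV; move: (e1 y) (e2 y); rewrite !ffunE.
  by case/setUP: yAV => ->.
have sub : (fun f => (restr f V, restr f A)) @: F \subset setX G H.
  apply/subsetP => p /imsetP [f]; rewrite inE => /andP [fW /andP [Pf TTf]] ->.
  rewrite inE /= inE Pf (pinj_restr (subsetUr _ _) fW) /=.
  apply/bigcupP; exists (pimg f A) => //; apply/setXnP => x.
  rewrite ffunE; case: ifP => xA; last by rewrite inE.
  move/pinjP: fW => [dom _]; move: (dom x); rewrite inE xA /=.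
  case fx: (f x) => [t|] // _; apply/imsetP; exists t => //.
  by rewrite inE -fx imset_f.
rewrite -(card_in_imset injF) mulnC.
apply: leq_trans (subset_leq_card sub) _; rewrite cardsX leq_mul2l.
apply/orP; right; apply: leq_trans (leq_card_bigcup _ _) _.
rewrite -sum_nat_const leq_sum // => B BT.
rewrite cardsXn (eq_bigr (fun x => if x \in A then k else 1)); last first.
  move=> x _; case: ifP => _; last by rewrite cards1.
  by rewrite card_imset ?cTT //; exact: Some_inj.
by rewrite -big_mkcond prod_nat_const cA.
Qed.

Lemma card_pinj_cover (J : {set {set D}}) (TT : {set {set T}}) k :
  {in J, forall A : {set D}, #|A| = k} -> {in TT, forall B : {set T}, #|B| = k} ->
  #|[set f | pinj (cover J) f & [forall A in J, pimg f A \in TT]]|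
    <= (#|TT| * k ^ k) ^ #|J|.
Proof.
move=> cJ cTT; move nJ : #|J| => n; elim: n J cJ nJ => [|n IHn] J cJ nJ.
  have -> : J = set0 by apply/eqP; rewrite -cards_eq0 nJ.
  rewrite expn0 -(cards1 ([ffun=> None] : {ffun D -> option T})) subset_leq_card //.
  apply/subsetP => f; rewrite !inE /cover big_set0 => /andP [fV _].
  by apply/eqP/ffunP => x; rewrite ffunE (pinj_dom fV) ?inE.
have [A AJ] : exists A, A \in J by apply/card_gt0P; rewrite nJ.
set J' := J :\ A.
have cJ' : {in J', forall B : {set D}, #|B| = k} by move=> B /setD1P [_ /cJ].
have nJ' : #|J'| = n by move: nJ; rewrite (cardsD1 A J) AJ => -[].
have coverJ : cover J = A :|: cover J' by rewrite /cover (big_setD1 A AJ).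
pose PJ' g := [forall B in J', pimg g B \in TT].
have block := card_pinj_block (cover J') PJ' (cJ A AJ) cTT.
rewrite coverJ expnS; apply: leq_trans (leq_trans _ block) _; last first.
  by rewrite leq_mul2l IHn ?orbT.
apply: subset_leq_card; apply/subsetP => f; rewrite !inE => /andP [-> /forallP TTf].
rewrite (implyP (TTf A) AJ) andbT; apply/forallP => B; apply/implyP => BJ'.
rewrite pimg_restr ?(bigcup_sup _ BJ') //.
by move: BJ' (TTf B) => /setD1P [_ ->].
Qed.

Definition some_ffun (f : {ffun D -> T}) : {ffun D -> option T} :=
  [ffun x => Some (f x)].

Lemma some_ffun_inj : injective some_ffun.
Proof. by move=> f g /ffunP e; apply/ffunP => x; move: (e x); rewrite !ffunE => -[]. Qed.

Lemma pinj_some_ffun (f : {ffun D -> T}) : injective f -> pinj setT (some_ffun f).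
Proof.
by move=> finj; apply/pinjP; split=> [x|x y _ _]; rewrite !ffunE ?inE // => -[/finj].
Qed.

Lemma pimg_some_ffun (f : {ffun D -> T}) A : pimg (some_ffun f) A = f @: A.
Proof.
apply/setP => t; rewrite inE; apply/imsetP/imsetP => [[x xA]|[x xA ->]].
  by rewrite ffunE => -[->]; exists x.
by exists x; rewrite ?ffunE.
Qed.

End PartialInjections.

Definition inj_blocks_into (D T : finType) (J : {set {set D}}) (TT : {set {set T}})
    : {set {ffun D -> T}} :=
  [set f : {ffun D -> T} | injectiveb f & [forall A in J, f @: A \in TT]].

Lemma card_inj_blocks_into (D T : finType) (J : {set {set D}}) (TT : {set {set T}}) k :
  {in J, forall A : {set D}, #|A| = k} -> {in TT, forall B : {set T}, #|B| = k} ->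
  #|inj_blocks_into J TT| * #|T| ^_ #|cover J| <= (#|TT| * k ^ k) ^ #|J| * #|T| ^_ #|D|.
Proof.
move=> cJ cTT; set U := cover J.
pose C (g : {ffun D -> option T}) := [forall A in J, pimg g A \in TT].
have restrC (V : {set D}) (g : {ffun D -> option T}) : U \subset V -> C (restr g V) = C g.
  move=> sUV; apply: eq_forallb_in => A AJ.
  by rewrite pimg_restr // (subset_trans _ sUV) ?bigcup_sup.
have cUD : #|U| <= #|D| by rewrite -cardsT subset_leq_card ?subsetT.
have ext := card_pinj_ext restrC (subsetT U) (etrans (cardsT D) (esym (subnKC cUD))).
have lift : #|inj_blocks_into J TT| <= #|[set g | pinj setT g & C g]|.
  rewrite -(card_imset _ (@some_ffun_inj D T)); apply: subset_leq_card.
  apply/subsetP => g /imsetP [f]; rewrite /inj_blocks_into !inE.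
  case/andP => /injectiveP finj Cf ->.
  rewrite pinj_some_ffun //=; apply/forallP => A.
  by rewrite pimg_some_ffun; move/forallP: Cf => /(_ A).
rewrite -[#|D| in X in _ <= X](subnKC cUD) ffactD.
rewrite mulnCA [X in X <= _]mulnC leq_mul2l; apply/orP; right.
apply: leq_trans lift (leq_trans ext _).
by rewrite leq_mul2r card_pinj_cover ?orbT.
Qed.

Lemma n_inj_predT (S T : finType) : n_inj (fun _ : {ffun S -> T} => true) = #|T| ^_ #|S|.
Proof. by rewrite /n_inj -card_inj_ffuns; apply: eq_card => f; rewrite !inE andbT. Qed.

Lemma n_injC (S T : finType) (P : pred {ffun S -> T}) :
  n_inj P + n_inj (predC P) = n_inj (fun _ : {ffun S -> T} => true).
Proof.
rewrite /n_inj -[RHS](cardsID [set f | P f]).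
by congr (_ + _); apply: eq_card => f; rewrite !inE andbT // andbC.
Qed.

Lemma card_image_family_setD (S T : finType) (f : {ffun S -> T})
    (SS : {set {set S}}) (TT : {set {set T}}) : injective f ->
  #|image_family f SS :\: TT| + #|[set A in SS | f @: A \in TT]| = #|SS|.
Proof.
move=> finj; set J := [set A in SS | _].
have -> : image_family f SS :\: TT = (fun A : {set S} => f @: A) @: (SS :\: J).
  apply/setP => B; rewrite !inE; apply/andP/imsetP => [[BT /imsetP [A AS eB]]|[A]].
    by exists A; rewrite // !inE AS -eB BT.
  by rewrite !inE => /andP [/nandP [/negP // | fAT] AS] ->; split => //; apply/imsetP; exists A.
rewrite card_imset; last exact: imset_inj.
rewrite addnC -(cardsID J SS); congr (_ + _).
by apply: eq_card => A; rewrite !inE; case: (A \in SS).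
Qed.

Local Open Scope ring_scope.

Lemma ler_expr_ffact (R : realDomainType) (m N : nat) (mu : R) :
  0 <= mu -> m%:R <= (1 - mu) * N%:R -> (mu * N%:R) ^+ m <= (N ^_ m)%:R.
Proof.
move=> mu0 hm.
have mN : (m <= N)%N.
  by rewrite -(ler_nat R); apply: le_trans hm _; rewrite ler_piMl ?ler0n //; lra.
rewrite ffact_prod natr_prod -[m in X in X <= _]card_ord -prodr_const.
apply: ler_prod => i _; rewrite mulr_ge0 ?ler0n //=.
have iN : (i < N)%N := leq_trans (ltn_ord i) mN.
have im : (i.+1%:R : R) <= m%:R by rewrite ler_nat (ltn_ord i).
rewrite natrB ?(ltnW iN) // -addn1 natrD in im *.
move: hm; rewrite mulrBl mul1r; lra.
Qed.

Lemma ler_card_bigcup_subsets (R : numDomainType) (I X : finType) (A : {set I})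
    (Q : pred {set I}) (E : {set I} -> {set X}) (c : R) :
  0 <= c -> (forall J : {set I}, J \subset A -> Q J -> #|E J|%:R <= c) ->
  #|\bigcup_(J : {set I} | (J \subset A) && Q J) E J|%:R <= 2 ^+ #|A| * c.
Proof.
move=> c0 cE; apply: le_trans (_ : (\sum_(J : {set I} | (J \subset A) && Q J) #|E J|)%:R <= _).
  by rewrite ler_nat leq_card_bigcup.
rewrite natr_sum; apply: le_trans (ler_sum _ (G := fun=> c) _) _ => [J /andP []|].
  exact: cE.
rewrite sumr_const -[X in X <= _]mulr_natl; apply: (ler_wpM2r c0 _).
rewrite -natrX ler_nat -card_powerset.
by apply: subset_leq_card; apply/subsetP => J; rewrite !inE => /andP [].
Qed.

Lemma card_inj_blocks_into_ler (R : realDomainType) (D T : finType)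
    (J : {set {set D}}) (TT : {set {set T}}) k (muS muT q : R) :
  0 < muS -> trivIset J ->
  {in J, forall A : {set D}, #|A| = k} -> {in TT, forall B : {set T}, #|B| = k} ->
  (k * #|J|)%:R <= (1 - muS) * #|T|%:R ->
  #|TT|%:R <= muT * #|T|%:R ^+ k -> muT * k%:R ^+ k <= q * muS ^+ k ->
  #|inj_blocks_into J TT|%:R <= q ^+ #|J| * (#|T| ^_ #|D|)%:R.
Proof.
move=> muS0 /eqP trivJ cJ cTT hJ hTT hmuT.
have cover_card : #|cover J| = (k * #|J|)%N.
  by rewrite -trivJ (eq_bigr _ cJ) sum_nat_const mulnC.
have := card_inj_blocks_into cJ cTT; rewrite cover_card -(ler_nat R) !natrM !natrX.
move=> count; set X := (muS * #|T|%:R) ^+ (k * #|J|).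
have X0 : 0 < X.
  case: (posnP #|T|) => [N0|N0]; last by rewrite exprn_gt0 // mulr_gt0 ?ltr0n.
  by rewrite /X; move: hJ; rewrite N0 mulr0 lern0 => /eqP ->; rewrite expr0.
have blockq : #|TT|%:R * k%:R ^+ k <= q * (muS * #|T|%:R) ^+ k.
  rewrite exprMn mulrA; apply: le_trans (ler_wpM2r _ hmuT); last exact: exprn_ge0.
  by rewrite mulrAC ler_wpM2r ?exprn_ge0 ?ler0n.
have block0 : 0 <= #|TT|%:R * k%:R ^+ k :> R by rewrite mulr_ge0 ?exprn_ge0 ?ler0n.
have X_le := ler_expr_ffact (ltW muS0) hJ.
rewrite -(ler_pM2r X0); apply: le_trans (ler_wpM2l (ler0n _ _) X_le) _.
apply: le_trans count _; rewrite mulrAC ler_wpM2r ?ler0n // natrM natrX.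
apply: le_trans (lerXn2r #|J| _ _ blockq) _; rewrite ?nnegrE ?(le_trans block0 blockq) //.
by rewrite exprMn -exprM.
Qed.

Lemma exists_pow_le_half_pow (R : archiRealFieldType) (beta : R) : 0 < beta -> beta < 1 ->
  exists2 q : R, 0 < q & forall n j : nat, beta * n%:R <= j%:R -> q ^+ j <= (beta / 2) ^+ n.
Proof.
move=> b0 b1; pose r := Num.Def.archi_bound beta^-1.
have br : 1 < beta * r%:R.
  by rewrite -ltr_pdivrMl // mulr1 archi_boundP // invr_ge0 ltW.
exists ((beta / 2) ^+ r) => [|n j hjn]; first by rewrite exprn_gt0 // divr_gt0.
rewrite -exprM; apply: ler_wiXn2l; rewrite ?divr_ge0 ?ler_pdivrMr ?ltW //; first lra.
rewrite -(ler_nat R) natrM; apply: le_trans (_ : n%:R * (beta * r%:R) <= _).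
  by rewrite ler_peMr ?ler0n ?ltW.
by have := ler0n R r; nra.
Qed.

Section FewGoodImages.

Variables (R : realFieldType) (S T : finType) (SS : {set {set S}}) (TT : {set {set T}}).
Variables (Delta : nat) (beta muS muT q : R).
Hypotheses (beta0 : 0 < beta) (muS0 : 0 < muS).
Hypotheses (cSS : {in SS, forall A : {set S}, #|A| = Delta}) (trivSS : trivIset SS).
Hypothesis hSS : (Delta * #|SS|)%:R <= (1 - muS) * #|T|%:R.
Hypothesis cTT : {in TT, forall B : {set T}, #|B| = Delta}.
Hypothesis hTT : #|TT|%:R <= muT * #|T|%:R ^+ Delta.
Hypothesis hmuT : muT * Delta%:R ^+ Delta <= q * muS ^+ Delta.
Hypothesis q_le : forall j : nat, beta * #|SS|%:R <= j%:R -> q ^+ j <= (beta / 2) ^+ #|SS|.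

Definition good_image (f : {ffun S -> T}) : bool :=
  (1 - beta) * #|SS|%:R < #|image_family f SS :\: TT|%:R.

Definition large_subfamily (J : {set {set S}}) : bool :=
  (J \subset SS) && (beta * #|SS|%:R <= #|J|%:R).

Lemma bad_image_mem_bigcup (f : {ffun S -> T}) : injective f -> ~~ good_image f ->
  f \in \bigcup_(J | large_subfamily J) inj_blocks_into J TT.
Proof.
move=> finj; rewrite /good_image -leNgt => bad_f.
have := card_image_family_setD SS TT finj.
set J := [set A in SS | _] => cardJ; apply/bigcupP; exists J.
  have sJ : J \subset SS by apply/subsetP => A; rewrite inE => /andP [].
  rewrite /large_subfamily sJ; move/(congr1 (GRing.natmul (1 : R))): cardJ.
  by rewrite natrD; lra.
rewrite /inj_blocks_into inE (introT (injectiveP _) finj) /=.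
by apply/forall_inP => A; rewrite inE => /andP [].
Qed.

Lemma card_inj_blocks_into_large J : large_subfamily J ->
  #|inj_blocks_into J TT|%:R <= (beta / 2) ^+ #|SS| * (#|T| ^_ #|S|)%:R.
Proof.
case/andP => sJ largeJ; have cJ : {in J, forall A : {set S}, #|A| = Delta}.
  by move=> A /(subsetP sJ)/cSS.
have hJ : (Delta * #|J|)%:R <= (1 - muS) * #|T|%:R.
  by apply: le_trans hSS; rewrite ler_nat leq_mul2l subset_leq_card ?orbT.
have := card_inj_blocks_into_ler muS0 (trivIsetS sJ trivSS) cJ cTT hJ hTT hmuT.
by move/le_trans; apply; rewrite ler_wpM2r ?ler0n ?q_le.
Qed.

Lemma n_inj_bad_image_le :
  (n_inj (predC good_image))%:R <= beta ^+ #|SS| * (#|T| ^_ #|S|)%:R.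
Proof.
apply: le_trans (_ : _ <= #|\bigcup_(J | large_subfamily J) inj_blocks_into J TT|%:R) _.
  rewrite ler_nat subset_leq_card //; apply/subsetP => f; rewrite inE => /andP [finj].
  exact/bad_image_mem_bigcup/injectiveP.
pose c := (beta / 2) ^+ #|SS| * (#|T| ^_ #|S|)%:R.
apply: le_trans (ler_card_bigcup_subsets (c := c) _ _) _.
- by rewrite mulr_ge0 ?ler0n ?exprn_ge0 ?divr_ge0 ?ltW.
- by move=> J sJ largeJ; apply: card_inj_blocks_into_large; rewrite /large_subfamily sJ.
by rewrite mulrA -exprMn [2 * _]mulrC divfK ?pnatr_eq0.
Qed.

End FewGoodImages.

Unset Implicit Arguments.
Set Strict Implicit.
Theorem lemma11p9 (R : realType) (Delta : nat) (beta muS : R) :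
  (0 < Delta)%N -> 0 < beta -> 0 < muS ->
  exists muT : R, 0 < muT /\
    forall (S T : finType) (SS : {set {set S}}) (TT : {set {set T}}),
      (forall A, A \in SS -> #|A| = Delta) ->
      (forall A B, A \in SS -> B \in SS -> A != B -> [disjoint A & B]) ->
      (#|SS|%:R <= Delta%:R^-1 * (1 - muS) * #|T|%:R) ->
      (forall B, B \in TT -> #|B| = Delta) ->
      (#|TT|%:R <= muT * #|T|%:R ^+ Delta) ->
      (n_inj (fun f : {ffun S -> T} =>
                (1 - beta) * #|SS|%:R < #|image_family f SS :\: TT|%:R))%:R
        >= (1 - beta ^+ #|SS|) * (@n_inj S T (fun _ => true))%:R.
Proof.
move=> Delta0 beta0 muS0; have [beta1|beta1] := leP 1 beta.
  exists 1; split => // S T SS TT _ _ _ _ _; apply: le_trans (ler0n _ _).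
  by rewrite mulr_le0_ge0 ?ler0n // subr_le0 exprn_ege1.
have [q q0 q_le] := exists_pow_le_half_pow beta0 beta1.
have Delta0R : 0 < Delta%:R :> R by rewrite ltr0n.
exists (q * muS ^+ Delta / Delta%:R ^+ Delta).
split => [|S T SS TT cSS dSS hSS cTT hTT]; first by rewrite !(mulr_gt0, invr_gt0, exprn_gt0).
have hmuT : q * muS ^+ Delta / Delta%:R ^+ Delta * Delta%:R ^+ Delta <= q * muS ^+ Delta.
  by rewrite divfK // expf_neq0 // lt0r_neq0.
have trivSS : trivIset SS by apply/trivIsetP => A B; exact: dSS.
have hSS' : (Delta * #|SS|)%:R <= (1 - muS) * #|T|%:R.
  by rewrite natrM -ler_pdivlMl // mulrA.
have := n_inj_bad_image_le beta0 muS0 cSS trivSS hSS' cTT hTT hmuT (q_le #|SS|).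
rewrite -n_inj_predT -(n_injC (good_image SS TT beta)) natrD mulrBl mul1r.
by rewrite lerBlDr lerD2l.
Qed.
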